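(* Let $\mathtt{W}_1,\mathtt{W}_2,\mathtt{W}\in\mathcal{U}^{\ast,\circ}$. (i) If $\mathtt{W}_1=\mathbf{1}$, then $m_{\mathtt{W}_1,\mathtt{W}_2;\mathtt{W}}=\delta_{\mathtt{W}=\mathtt{W}_2}$. (ii) If $\mathtt{W}_2=\mathbf{1}$, then $m_{\mathtt{W}_1,\mathtt{W}_2;\mathtt{W}}=\delta_{\mathtt{W}=\mathtt{W}_1}$. (iii) If $\mathtt{W}=\mathbf{1}$, then $m_{\mathtt{W}_1,\mathtt{W}_2;\mathtt{W}}=\delta_{\mathtt{W}_1=\mathtt{W}_2=\mathbf{1}}$. (iv) If $\mathtt{W}_1,\mathtt{W}_2,\mathtt{W}\neq\mathbf{1}$, write $\mathtt{W}_1=\mathtt{W}_1'u_{j_1}u_0^{n_1}$, $\mathtt{W}_2=\mathtt{W}_2'u_{j_2}u_0^{n_2}$, $\mathtt{W}=\mathtt{W}'u_{j_3}u_0^{n_3}$ with uniquely determined $\mathtt{W}_1',\mathtt{W}_2',\mathtt{W}'\in\mathcal{U}^{\ast,\circ}$, $j_1,j_2,j_3\in\mathbb{Z}_{>0}$, $n_1,n_2,n_3\in\mathbb{Z}_{\ge0}$. Then \begin{align*} m_{\mathtt{W}_1,\mathtt{W}_2;\mathtt{W}} =& \sum_{\substack{0\le k\le j\le n_2\\ 0\le\varepsilon\le\min\{1,n_2-j\}}}\binom{n_1+k}{n_1}\binom{n_1}{j-k}\, m_{\mathtt{W}_1',\mathtt{W}_2'u_{j_2}u_0^{n_2-j-\varepsilon};\mathtt{W}'}\,\delta_{j_1=j_3}\,\delta_{n_1+k=n_3}\\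 &+\sum_{\substack{0\le k\le j\le n_1\\ 0\le\varepsilon\le\min\{1,n_1-j\}}}\binom{n_2+k}{n_2}\binom{n_2}{j-k}\, m_{\mathtt{W}_1'u_{j_1}u_0^{n_1-j-\varepsilon},\mathtt{W}_2';\mathtt{W}'}\,\delta_{j_2=j_3}\,\delta_{n_2+k=n_3}\\ &+\sum_{k=0}^{n_2}\binom{n_1+k}{n_1}\binom{n_1}{n_2-k}\, m_{\mathtt{W}_1',\mathtt{W}_2';\mathtt{W}'}\,\delta_{j_1+j_2=j_3}\,\delta_{n_1+k=n_3}. \end{align*}
   Context: Let $\mathcal{U}=\{u_j\mid j\in\mathbb{Z}_{\geq0}\}$ be an alphabet; $\mathcal{U}^\ast$ is the set of words (finite concatenations of letters, including the empty word $\mathbf{1}$), and $\mathbb{Q}\langle\mathcal{U}\rangle$ is the $\mathbb{Q}$-vector space with basis $\mathcal{U}^\ast$; $u_0^n$ denotes $n$ copies of $u_0$. The stuffle product $\ast$ on $\mathbb{Q}\langle\mathcal{U}\rangle$ is the $\mathbb{Q}$-bilinear product with $\mathbf{1}\ast\mathtt{W}=\mathtt{W}\ast\mathbf{1}=\mathtt{W}$ and $u_{j_1}\mathtt{W}_1\ast u_{j_2}\mathtt{W}_2 = u_{j_1}(\mathtt{W}_1\ast u_{j_2}\mathtt{W}_2)+u_{j_2}(u_{j_1}\mathtt{W}_1\ast\mathtt{W}_2)+u_{j_1+j_2}(\mathtt{W}_1\ast\mathtt{W}_2)$ for $j_1,j_2\in\mathbb{Z}_{\ge0}$ and words $\mathtt{W}_1,\mathtt{W}_2$.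 $\mathcal{U}^{\ast,\circ}$ is the set of words not starting with $u_0$ (including $\mathbf{1}$); its span is closed under $\ast$. For $\mathtt{W}_1,\mathtt{W}_2\in\mathcal{U}^{\ast,\circ}$, $m_{\mathtt{W}_1,\mathtt{W}_2;\mathtt{W}}\in\mathbb{Z}_{\ge0}$ is defined by $\mathtt{W}_1\ast\mathtt{W}_2=\sum_{\mathtt{W}\in\mathcal{U}^{\ast,\circ}}m_{\mathtt{W}_1,\mathtt{W}_2;\mathtt{W}}\mathtt{W}$. $\delta_{\bullet}$ is $1$ if the condition $\bullet$ holds and $0$ otherwise. Binomial coefficients $\binom{a}{b}$ with $b<0$ or $b>a$ are $0$. *)

From mathcomp Require Import all_boot.
Set Implicit Arguments. Unset Strict Implicit. Unset Printing Implicit Defensive.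

(* A word u_{a_1} u_{a_2} ... u_{a_r} in the alphabet U = {u_j | j >= 0} is
   encoded as the sequence [:: a_1; ...; a_r] of indices; the empty word 1 is [::]. *)
Definition word := seq nat.

(* The stuffle product of two words, as a finite formal sum of words with
   multiplicity (a sum of basis words with coefficient 1 per occurrence). *)
Fixpoint stuffle (a b : word) {struct a} : seq word :=
  match a with
  | [::] => [:: b]
  | x :: a' =>
      let fix aux (b : word) : seq word :=
        match b with
        | [::] => [:: a]
        | y :: b' =>
            map (cons x) (stuffle a' b) ++ map (cons y) (aux b')
              ++ map (cons (x + y)) (stuffle a' b')
        end in
      aux b
  end.

Definition circ (w : word) : bool :=
  if w is x :: _ then x != 0 else true.

Definition mcoef (w1 w2 w : word) : nat := count_mem w (stuffle w1 w2).

Definition wsplit (w' : word) (j n : nat) : word := w' ++ j :: nseq n 0.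

From mathcomp Require Import all_boot.
From mathcomp Require Import ring zify.

(* Read the stuffle recursion from the right: the last letter of a word in
   W1 * W2 is the last letter of W1, that of W2, or their sum.  Let F(n1,n2,n3)
   be the coefficient in (iv).  For n3 > 0 the last letter of W is u_0, which a
   letter u_j with j > 0 never produces, so F obeys the lattice-path recursion
     F(n1,n2,n3) = F(n1-1,n2,n3-1) + F(n1,n2-1,n3-1) + F(n1-1,n2-1,n3-1)
   (terms with a negative index omitted), whose solutions are determined by
   their values at n3 = 0; there only u_j1, u_j2 or u_(j1+j2) can produce u_j3.
   The right-hand side of (iv) obeys the same recursion with the same values at
   n3 = 0: its inner sums over k are the numbers C(n,p) C(p,p+q-n) of lattice
   paths from (0,0) to (p,q) made of n steps (1,0), (0,1) or (1,1), and
   convolution in q preserves the recursion. *)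

Lemma count_mem_map_cons x (s : seq word) W :
  count_mem W (map (cons x) s) = if W is y :: W' then (x == y) * count_mem W' s else 0.
Proof.
elim: s => [|v s IH] /=; first by case: W => [|? ?]; rewrite ?muln0.
rewrite IH; case: W {IH} => [|y W'] //=.
by rewrite eqseq_cons mulnDr mulnb.
Qed.

Lemma mcoef_nil_l B W : mcoef [::] B W = (B == W).
Proof. by rewrite /mcoef /= addn0. Qed.

Lemma mcoef_nil_r A W : mcoef A [::] W = (A == W).
Proof. by case: A => [|x A]; rewrite /mcoef /= addn0. Qed.

Lemma mcoef_cons x A y B v W :
  mcoef (x :: A) (y :: B) (v :: W) =
  (x == v) * mcoef A (y :: B) W + (y == v) * mcoef (x :: A) B W
  + (x + y == v) * mcoef A B W.
Proof. by rewrite /mcoef /= !count_cat !count_mem_map_cons addnA. Qed.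

Lemma mcoef_nil A B : mcoef A B [::] = (A == [::]) && (B == [::]).
Proof.
case: A => [|x A]; first by rewrite mcoef_nil_l.
case: B => [|y B]; first by rewrite mcoef_nil_r.
by rewrite /mcoef /= !count_cat !count_mem_map_cons.
Qed.

Lemma mcoef_rcons A a B b W w :
  mcoef (rcons A a) (rcons B b) (rcons W w) =
  (a == w) * mcoef A (rcons B b) W + (b == w) * mcoef (rcons A a) B W
  + (a + b == w) * mcoef A B W.
Proof.
have rcons_nil (s : word) z : (rcons s z == [::]) = false by case: s.
elim: W A B => [|v W IH] [|x A] [|y B].
1-4: by rewrite /= mcoef_cons !mcoef_nil ?rcons_nil !andbF !muln0.
- rewrite mcoef_cons !mcoef_nil_l !mcoef_nil_r.
  by case: W {IH} => [|u [|t W]] /=; rewrite !eqseq_cons ?andbT ?andbF /=; ring.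
- rewrite !mcoef_cons (IH [::] B) !mcoef_nil_l !eqseq_cons -rcons_cons.
  by rewrite !eqseq_rcons -!mulnb; ring.
- rewrite !mcoef_cons (IH A [::]) !mcoef_nil_r !eqseq_cons -rcons_cons.
  by rewrite !eqseq_rcons -!mulnb; ring.
- by rewrite [LHS]mcoef_cons -!rcons_cons !IH !rcons_cons !mcoef_cons; ring.
Qed.

Lemma wsplit0 X j : wsplit X j 0 = rcons X j.
Proof. by rewrite /wsplit cats1. Qed.

Lemma wsplitS X j n : wsplit X j n.+1 = rcons (wsplit X j n) 0.
Proof. by rewrite /wsplit -cats1 -catA -addn1 nseqD. Qed.

Definition delannoy_rec (f : nat -> nat -> nat -> nat) : Prop :=
  forall p q n, f p q n.+1 =
    (0 < p) * f p.-1 q n + (0 < q) * f p q.-1 n + (0 < p) * (0 < q) * f p.-1 q.-1 n.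

Lemma delannoy_rec_eq f g : delannoy_rec f -> delannoy_rec g ->
  (forall p q, f p q 0 = g p q 0) -> forall p q n, f p q n = g p q n.
Proof. by move=> Rf Rg fg0 p q n; elim: n p q => [|n IH] p q; rewrite ?Rf ?Rg ?IH. Qed.

Lemma delannoy_recD f g : delannoy_rec f -> delannoy_rec g ->
  delannoy_rec (fun p q n => f p q n + g p q n).
Proof. by move=> Rf Rg p q n; rewrite Rf Rg; ring. Qed.

Lemma delannoy_recMl c f : delannoy_rec f -> delannoy_rec (fun p q n => c * f p q n).
Proof. by move=> Rf p q n; rewrite Rf; ring. Qed.

Lemma delannoy_rec_swap f : delannoy_rec f -> delannoy_rec (fun p q n => f q p n).
Proof. by move=> Rf p q n; rewrite Rf; ring. Qed.

Lemma delannoy_rec_conv f (g : nat -> nat) : delannoy_rec f ->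
  delannoy_rec (fun p q n => \sum_(j < q.+1) f p j n * g (q - j)).
Proof.
move=> Rf p q n.
under eq_bigr => j _ do rewrite Rf !mulnDl -!mulnA.
rewrite !big_split /= -!big_distrr /=.
case: q => [|q]; first by rewrite !big_ord1 /= !mul0n !muln0.
rewrite [X in _ + X + _ = _]big_ord_recl [X in _ + _ * X = _]big_ord_recl.
rewrite !mul0n !add0n /= !mul1n !muln1; congr (_ + _ + _ * _).
all: by apply: eq_bigr => i _; rewrite mul1n add0n /bump leq0n add1n subSS.
Qed.

Definition delannoy p q n := \sum_(k < q.+1) 'C(p + k, p) * 'C(p, q - k) * (p + k == n).

Lemma delannoyE p q n : delannoy p q n = 'C(n, p) * 'C(p, p + q - n) * (n <= p + q).
Proof.
rewrite /delannoy.
case: (leqP p n) => [le_pn | lt_np]; last first.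
  rewrite bin_small // big1 // => k _.
  by rewrite (_ : p + k == n = false) ?muln0 //; lia.
case: (leqP n (p + q)) => [le_n_pq | lt_pq_n]; last first.
  rewrite muln0 big1 // => k _.
  by rewrite (_ : p + k == n = false) ?muln0 //; move: (ltn_ord k); lia.
have lt_k : n - p < q.+1 by lia.
rewrite (bigD1 (Ordinal lt_k)) //= big1 => [|k ne_k].
  by rewrite subnKC // eqxx addn0 !muln1 (_ : q - (n - p) = p + q - n) //; lia.
rewrite (_ : p + k == n = false) ?muln0 //; apply/negbTE/eqP => pk_n.
by move/eqP: ne_k; apply; apply: val_inj => /=; lia.
Qed.

Lemma delannoy_steps0 p q : delannoy p q 0 = (p == 0) && (q == 0).
Proof. by rewrite delannoyE; case: p => [|p]; case: q. Qed.

Lemma delannoy0l q n : delannoy 0 q n = (q == n).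
Proof. by rewrite delannoyE bin0 bin0n mul1n subn_eq0 mulnb eqn_leq. Qed.

Lemma delannoy0r p n : delannoy p 0 n = (p == n).
Proof. by rewrite /delannoy big_ord1 /= addn0 binn subn0 bin0 !mul1n. Qed.

Lemma delannoySSS p q n :
  delannoy p.+1 q.+1 n.+1 = delannoy p q.+1 n + delannoy p.+1 q n + delannoy p q n.
Proof.
rewrite !delannoyE !addSn !addnS subSS ltnS.
have [le_n | lt_n] := leqP n (p + q).
  by rewrite subSn // (leqW le_n) (binS n) (binS p); ring.
have -> : (p + q).+1 - n = 0 by lia.
by rewrite !bin0 binS /=; ring.
Qed.

Lemma delannoy_rec_delannoy : delannoy_rec delannoy.
Proof.
by move=> [|p] [|q] n /=; rewrite ?delannoySSS ?delannoy0l ?delannoy0r /=; ring.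
Qed.

Definition sum_eps (g : nat -> nat) r := \sum_(e < (minn 1 r).+1) g (r - e).

Lemma sum_epsE g r : sum_eps g r = g r + (0 < r) * g r.-1.
Proof.
rewrite /sum_eps; case: r => [|r]; first by rewrite big_ord1 addn0.
by rewrite minnSS min0n big_ord_recl big_ord1 lift0 subSS !subn0 mul1n.
Qed.

Lemma sum_delannoy_steps0 p q (g : nat -> nat) :
  \sum_(j < q.+1) delannoy p j 0 * g (q - j) = (p == 0) * g q.
Proof.
rewrite big_ord_recl delannoy_steps0 andbT subn0 big1 ?addn0 // => j _.
by rewrite delannoy_steps0 andbF.
Qed.

Section LastBlock.
Variables (A B W : word) (a b w : nat).
Hypotheses (a_gt0 : 0 < a) (b_gt0 : 0 < b) (w_gt0 : 0 < w).

Lemma mcoef_wsplit_rec :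
  delannoy_rec (fun p q n => mcoef (wsplit A a p) (wsplit B b q) (wsplit W w n)).
Proof.
have [a0 b0 ab0] : [/\ a == 0 = false, b == 0 = false & a + b == 0 = false].
  by split; lia.
move=> [|p] [|q] n /=;
  by rewrite !wsplitS ?wsplit0 [LHS]mcoef_rcons ?addn0 ?add0n ?a0 ?b0 ?ab0 /=; ring.
Qed.

Lemma mcoef_wsplit0 p q :
  mcoef (wsplit A a p) (wsplit B b q) (wsplit W w 0) =
    (a == w) * ((p == 0) * sum_eps (fun m => mcoef A (wsplit B b m) W) q)
  + (b == w) * ((q == 0) * sum_eps (fun m => mcoef (wsplit A a m) B W) p)
  + (a + b == w) * mcoef A B W * ((p == 0) && (q == 0)).
Proof.
have w0 : 0 == w = false by lia.
rewrite !sum_epsE; case: p => [|p]; case: q => [|q];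
  by rewrite !wsplit0 ?wsplitS mcoef_rcons ?addn0 ?add0n ?w0 /=; ring.
Qed.

Lemma mcoef_wsplit p q n :
  mcoef (wsplit A a p) (wsplit B b q) (wsplit W w n) =
    (a == w) * \sum_(j < q.+1)
       delannoy p j n * sum_eps (fun m => mcoef A (wsplit B b m) W) (q - j)
  + (b == w) * \sum_(j < p.+1)
       delannoy q j n * sum_eps (fun m => mcoef (wsplit A a m) B W) (p - j)
  + (a + b == w) * mcoef A B W * delannoy p q n.
Proof.
move: p q n; apply: delannoy_rec_eq.
- exact: mcoef_wsplit_rec.
- apply: delannoy_recD; first apply: delannoy_recD; apply: delannoy_recMl.
  + exact: delannoy_rec_conv delannoy_rec_delannoy.
  + by apply: delannoy_rec_swap; apply: delannoy_rec_conv delannoy_rec_delannoy.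
  + exact: delannoy_rec_delannoy.
- by move=> p q; rewrite mcoef_wsplit0 !sum_delannoy_steps0 delannoy_steps0.
Qed.
End LastBlock.

Lemma big_binom_delannoy p q n x c :
  \sum_(k < q.+1) 'C(p + k, p) * 'C(p, q - k) * x * c * (p + k == n) =
  c * x * delannoy p q n.
Proof. by rewrite /delannoy big_distrr; apply: eq_bigr => k _ /=; ring. Qed.

Lemma big_binom_eps_delannoy p q n c g :
  \sum_(j < q.+1) \sum_(k < j.+1) \sum_(e < (minn 1 (q - j)).+1)
     'C(p + k, p) * 'C(p, j - k) * g (q - j - e) * c * (p + k == n) =
  c * \sum_(j < q.+1) delannoy p j n * sum_eps g (q - j).
Proof.
rewrite big_distrr; apply: eq_bigr => j _.
rewrite /delannoy /sum_eps !big_distrl big_distrr; apply: eq_bigr => k _.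
by rewrite !big_distrr; apply: eq_bigr => e _ /=; ring.
Qed.

Theorem proposition2p3 :
  (* (i) *)
  (forall W2 W : word, circ W2 -> circ W ->
     mcoef [::] W2 W = (W == W2)) /\
  (* (ii) *)
  (forall W1 W : word, circ W1 -> circ W ->
     mcoef W1 [::] W = (W == W1)) /\
  (* (iii) *)
  (forall W1 W2 : word, circ W1 -> circ W2 ->
     mcoef W1 W2 [::] = ((W1 == [::]) && (W2 == [::]))) /\
  (* (iv) *)
  (forall (W1' W2' W' : word) (j1 j2 j3 n1 n2 n3 : nat),
     circ W1' -> circ W2' -> circ W' ->
     0 < j1 -> 0 < j2 -> 0 < j3 ->
     mcoef (wsplit W1' j1 n1) (wsplit W2' j2 n2) (wsplit W' j3 n3) =
       \sum_(j < n2.+1) \sum_(k < j.+1) \sum_(e < (minn 1 (n2 - j)).+1)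
          'C(n1 + k, n1) * 'C(n1, j - k)
          * mcoef W1' (wsplit W2' j2 (n2 - j - e)) W'
          * (j1 == j3) * (n1 + k == n3)
     + \sum_(j < n1.+1) \sum_(k < j.+1) \sum_(e < (minn 1 (n1 - j)).+1)
          'C(n2 + k, n2) * 'C(n2, j - k)
          * mcoef (wsplit W1' j1 (n1 - j - e)) W2' W'
          * (j2 == j3) * (n2 + k == n3)
     + \sum_(k < n2.+1)
          'C(n1 + k, n1) * 'C(n1, n2 - k)
          * mcoef W1' W2' W'
          * (j1 + j2 == j3) * (n1 + k == n3)).
Proof.
(* None of the [circ] hypotheses is needed. *)
split; [|split; [|split]].
- by move=> W2 W _ _; rewrite mcoef_nil_l eq_sym.
- by move=> W1 W _ _; rewrite mcoef_nil_r eq_sym.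
- by move=> W1 W2 _ _; rewrite mcoef_nil.
- move=> W1' W2' W' j1 j2 j3 n1 n2 n3 _ _ _ j1_gt0 j2_gt0 j3_gt0.
  by rewrite mcoef_wsplit // -!big_binom_eps_delannoy -big_binom_delannoy.
Qed.
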